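(* Let $\Lambda=[\mu_1,L_1]\cup[\mu_2,L_2]$ with $0<\mu_1<L_1\le\mu_2<L_2$ and $L_1-\mu_1=L_2-\mu_2$, set $\rho=\frac{L_2+\mu_1}{L_2-\mu_1}$, $R=\frac{\mu_2-L_1}{L_2-\mu_1}$, $m=\left(\frac{\sqrt{\rho^2-R^2}-\sqrt{\rho^2-1}}{\sqrt{1-R^2}}\right)^2$, $h_0=\frac{1+m}{L_1}$, $h_1=\frac{1+m}{\mu_2}$, and $$\sigma_2^\Lambda(\lambda)=\frac{1}{2m}(1+m-\lambda h_0)(1+m-\lambda h_1)-1.$$ Then for every integer $n\ge1$, with $t=2n$, the polynomial $\lambda\mapsto \frac{T_n(\sigma_2^\Lambda(\lambda))}{T_n(\sigma_2^\Lambda(0))}$ is a minimizer of $\sup_{\lambda\in\Lambda}|P(\lambda)|$ over all real polynomials $P$ of degree at most $t$ with $P(0)=1$.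
   Context: $T_n$ denotes the Chebyshev polynomial of the first kind of degree $n$ ($T_0=1$, $T_1(x)=x$, $T_{n+1}=2xT_n-T_{n-1}$). *)

From HB Require Import structures.
From mathcomp Require Import all_boot all_order all_algebra.
From mathcomp Require Import all_classical all_reals.
Set Implicit Arguments. Unset Strict Implicit. Unset Printing Implicit Defensive.
Import Order.TTheory GRing.Theory Num.Theory.
Local Open Scope ring_scope.
Local Open Scope classical_set_scope.

Fixpoint cheb_pair (R : nzRingType) (n : nat) : {poly R} * {poly R} :=
  match n with
  | 0%N => (1, 'X)
  | k.+1 => let p := cheb_pair R k in (p.2, 2%:R *: 'X * p.2 - p.1)
  end.
Definition cheb (R : nzRingType) (n : nat) : {poly R} := (cheb_pair R n).1.

Definition Lam (R : realType) (mu1 L1 mu2 L2 : R) : set R :=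
  [set x | mu1 <= x <= L1] `|` [set x | mu2 <= x <= L2].

Definition supnorm_on (R : realType) (A : set R) (P : {poly R}) : R :=
  sup [set `|P.[x]| | x in A].

Definition rho_ (R : realType) (mu1 L2 : R) : R := (L2 + mu1) / (L2 - mu1).
Definition Rr_ (R : realType) (mu1 L1 mu2 L2 : R) : R := (mu2 - L1) / (L2 - mu1).
Definition m_ (R : realType) (mu1 L1 mu2 L2 : R) : R :=
  let rho := rho_ mu1 L2 in let r := Rr_ mu1 L1 mu2 L2 in
  ((Num.sqrt (rho ^+ 2 - r ^+ 2) - Num.sqrt (rho ^+ 2 - 1)) / Num.sqrt (1 - r ^+ 2)) ^+ 2.

Definition sigma2 (R : realType) (mu1 L1 mu2 L2 : R) : {poly R} :=
  let m := m_ mu1 L1 mu2 L2 in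
  let h0 := (1 + m) / L1 in let h1 := (1 + m) / mu2 in
  (2 * m)^-1 *: (((1 + m)%:P - h0 *: 'X) * ((1 + m)%:P - h1 *: 'X)) - 1.

Definition Qopt (R : realType) (mu1 L1 mu2 L2 : R) (n : nat) : {poly R} :=
  let s := sigma2 mu1 L1 mu2 L2 in
  ((cheb R n).[s.[0]])^-1 *: (cheb R n \Po s).

From HB Require Import structures.
From mathcomp Require Import all_boot all_order all_algebra.
From mathcomp Require Import all_classical all_reals.
From mathcomp Require Import topology normedtype derive trigo.
From mathcomp Require Import ring lra zify.
Import Order.TTheory GRing.Theory Num.Theory.
Import numFieldNormedType.Exports.
Local Open Scope ring_scope.
Local Open Scope classical_set_scope.

Set Implicit Arguments.
Unset Strict Implicit.
Unset Printing Implicit Defensive.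

(* With c the midpoint of the gap (L1, mu2), g its half-length and d = c - mu1,
   the set Lambda is { x | g <= |x - c| <= d } and sigma_2 is the quadratic
   k ((x - c)^2 - g^2) - 1 with k = (1 + m)^2 / (2 m L1 mu2).  The value of m
   is exactly what makes d^2 = 2/k + g^2, i.e. sigma_2(mu1) = sigma_2(L2) = 1,
   so sigma_2 maps each interval onto [-1, 1] and |Q| <= E := 1/T_n(sigma_2(0))
   on Lambda, with value +-E, alternating, at the n + 1 preimages of the
   Chebyshev extrema in each interval.  A P of degree <= 2n with P(0) = 1 and
   sup norm < E would make Q - P change sign n times on each interval and
   vanish at 0: 2n + 1 roots, so P = Q, a contradiction. *)

Section Chebyshev.
Variable R : realType.

Lemma chebSS n : cheb R n.+2 = 2%:R *: 'X * cheb R n.+1 - cheb R n.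
Proof. by []. Qed.

Lemma horner_chebSS n x :
  (cheb R n.+2).[x] = 2 * x * (cheb R n.+1).[x] - (cheb R n).[x].
Proof. by rewrite chebSS hornerD hornerN hornerM hornerZ hornerX. Qed.

Lemma size_cheb n : (size (cheb R n) <= n.+1)%N.
Proof.
suff: (size (cheb R n) <= n.+1)%N /\ (size (cheb R n.+1) <= n.+2)%N by case.
elim: n => [|n [IH1 IH2]]; first by rewrite /cheb /= size_polyX size_poly1.
split=> //; rewrite chebSS (leq_trans (size_polyD _ _)) // size_polyN geq_max.
apply/andP; split; last by lia.
apply: leq_trans (size_polyMleq _ _) _.
have : (size (2%:R *: 'X : {poly R}) <= 2)%N.
  by rewrite (leq_trans (size_scale_leq _ _)) ?size_polyX.
by move: IH2; case: (size _) => [|a]; case: (size _) => [|b] /=; lia.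
Qed.

Lemma horner_cheb_cos n t : (cheb R n).[cos t] = cos (n%:R * t).
Proof.
suff: (cheb R n).[cos t] = cos (n%:R * t) /\
      (cheb R n.+1).[cos t] = cos (n.+1%:R * t) by case.
elim: n => [|n [IH1 IH2]].
  by rewrite /cheb /= hornerC hornerX mul0r cos0 mul1r.
split=> //; rewrite horner_chebSS IH1 IH2.
have -> : n.+2%:R * t = n.+1%:R * t + t by rewrite mulrSr mulrDl mul1r.
have -> : n%:R * t = n.+1%:R * t - t by rewrite mulrSr mulrDl mul1r addrK.
rewrite !cosD cosN sinN; ring.
Qed.

Lemma horner_chebN n x : (cheb R n).[- x] = (-1) ^+ n * (cheb R n).[x].
Proof.
suff: (cheb R n).[- x] = (-1) ^+ n * (cheb R n).[x] /\
      (cheb R n.+1).[- x] = (-1) ^+ n.+1 * (cheb R n.+1).[x] by case.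
elim: n => [|n [IH1 IH2]].
  by rewrite /cheb /= !hornerC !hornerX expr0 mul1r expr1 mulN1r.
split=> //; rewrite !horner_chebSS IH1 IH2 !exprS; ring.
Qed.

Lemma norm_cheb_le1 n x : -1 <= x <= 1 -> `|(cheb R n).[x]| <= 1.
Proof.
by move=> x1; rewrite -(acosK (x := x)) ?in_itv // horner_cheb_cos cos_max.
Qed.

Lemma cheb_ge1 n x : 1 <= x -> 1 <= (cheb R n).[x].
Proof.
move=> x1; suff: 1 <= (cheb R n).[x] <= (cheb R n.+1).[x] by case/andP.
elim: n => [|n /andP[IH1 IH2]]; first by rewrite /cheb /= hornerC hornerX lexx.
by rewrite horner_chebSS (le_trans IH1 IH2) /=; nra.
Qed.

Definition cheb_node (n i : nat) : R := cos (i%:R * pi / n%:R).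

Lemma cheb_node_bound n i : -1 <= cheb_node n i <= 1.
Proof. by rewrite cos_geN1 cos_le1. Qed.

Lemma cheb_node_decr n i : (i < n)%N -> cheb_node n i.+1 < cheb_node n i.
Proof.
move=> lt_in; have n_gt0 : 0 < n%:R :> R by rewrite ltr0n; lia.
have mem_0pi j : (j <= n)%N -> (j%:R * pi / n%:R : R) \in `[0, pi]%R.
  move=> le_jn; rewrite in_itv /=; apply/andP; split.
    by rewrite divr_ge0 // mulr_ge0 // ltW // pi_gt0.
  by rewrite ler_pdivrMr // mulrC ler_pM2l ?pi_gt0 // ler_nat.
rewrite /cheb_node ltr_cos ?mem_0pi ?(ltnW lt_in) //.
by rewrite ltr_pM2r ?invr_gt0 // ltr_pM2r ?pi_gt0 // ltr_nat.
Qed.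

Lemma horner_cheb_node n i : (0 < n)%N -> (cheb R n).[cheb_node n i] = (-1) ^+ i.
Proof.
move=> n_gt0; rewrite horner_cheb_cos.
have -> : n%:R * (i%:R * pi / n%:R) = i%:R * pi :> R.
  by field; rewrite pnatr_eq0 -lt0n.
elim: i => [|i IH]; first by rewrite mul0r cos0.
by rewrite mulrSr mulrDl mul1r cosDpi IH exprS mulN1r.
Qed.

End Chebyshev.

Section Alternation.
Variable R : realType.
Implicit Types (D P Q : {poly R}) (x y : nat -> R).

Lemma root_between D a b : a < b -> D.[a] * D.[b] < 0 ->
  exists2 r, a < r < b & root D r.
Proof.
move=> lt_ab Dab_lt0.
have D0 : 0 \in `[Num.min D.[a] D.[b], Num.max D.[a] D.[b]]%R.
  by rewrite in_itv /= ge_min le_max; apply/andP; split; nra.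
have Dcont : {within `[a, b], continuous (horner D)}.
  by apply: continuous_subspaceT => z; exact: continuous_horner.
have [r] := IVT (ltW lt_ab) Dcont D0.
rewrite in_itv /= => /andP[ar rb] Dr0; exists r; last exact/rootP.
have a_neq_r : a != r by apply: contraTneq Dab_lt0 => ->; rewrite Dr0 mul0r ltxx.
have r_neq_b : r != b by apply: contraTneq Dab_lt0 => <-; rewrite Dr0 mulr0 ltxx.
by rewrite !lt_neqAle a_neq_r r_neq_b ar rb.
Qed.

Lemma le_first_last x N : (forall i, (i < N)%N -> x i < x i.+1) -> x 0%N <= x N.
Proof.
elim: N => // N IH x_incr; apply: le_trans (ltW (x_incr N (ltnSn N))).
by apply: IH => i lt_iN; apply/x_incr/ltnW.
Qed.

Lemma roots_of_sign_changes D x N :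
  (forall i, (i < N)%N -> x i < x i.+1) ->
  (forall i, (i < N)%N -> D.[x i] * D.[x i.+1] < 0) ->
  exists rs : seq R, [/\ size rs = N, uniq rs, all (root D) rs &
     all (fun r => x 0%N < r < x N) rs].
Proof.
elim: N => [|N IH] x_incr D_alt; first by exists [::].
have [rs [size_rs uniq_rs root_rs mem_rs]] := IH
  (fun i lt_iN => x_incr i (ltnW lt_iN)) (fun i lt_iN => D_alt i (ltnW lt_iN)).
have [r /andP[lt_xN_r lt_r_xSN] Dr0] :=
  @root_between D _ _ (x_incr N (ltnSn N)) (D_alt N (ltnSn N)).
have le_x0_xN : x 0%N <= x N by apply: le_first_last => i lt_iN; apply/x_incr/ltnW.
exists (rcons rs r); rewrite size_rcons size_rs rcons_uniq uniq_rs all_rcons Dr0.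
rewrite all_rcons (le_lt_trans le_x0_xN lt_xN_r) lt_r_xSN andbT; split=> //.
- by apply/negP => /(allP mem_rs) /andP[_]; rewrite ltNge (ltW lt_xN_r).
- apply/allP => s /(allP mem_rs) /andP[-> lt_s_xN] /=.
  exact: lt_trans lt_s_xN (x_incr N (ltnSn N)).
Qed.

Lemma mul_alternating_lt0 (u a b : R) :
  `|a| < `|u| -> `|b| < `|u| -> (u - a) * (- u - b) < 0.
Proof.
rewrite !ltr_norml => /andP[a_lo a_hi] /andP[b_lo b_hi].
have [u_ge0|u_lt0] := leP 0 u.
- by move: a_lo a_hi b_lo b_hi; rewrite ger0_norm //; nra.
- by move: a_lo a_hi b_lo b_hi; rewrite ltr0_norm //; nra.
Qed.

Definition alternates Q x N (e : R) :=
  (forall i, (i < N)%N -> x i < x i.+1) /\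
  (forall i, (i <= N)%N -> Q.[x i] = (-1) ^+ i * e).

Lemma roots_of_alternation Q P x N (e : R) : alternates Q x N e ->
  (forall i, (i <= N)%N -> `|P.[x i]| < `|e|) ->
  exists rs : seq R, [/\ size rs = N, uniq rs, all (root (Q - P)) rs &
     all (fun r => x 0%N < r < x N) rs].
Proof.
move=> [x_incr Qx] Px; apply: roots_of_sign_changes => // i lt_iN.
rewrite !hornerD !hornerN !Qx ?(ltnW lt_iN) // exprS mulN1r mulNr.
apply: mul_alternating_lt0;
  by rewrite normrM normrX normrN1 expr1n mul1r Px ?(ltnW lt_iN).
Qed.

Lemma eq_poly_of_alternations Q P x y (e f : R) n :
  (size (Q - P)%R <= (2 * n).+1)%N -> Q.[0] = P.[0] -> 0 < x 0%N -> x n <= y 0%N ->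
  alternates Q x n e -> alternates Q y n f ->
  (forall i, (i <= n)%N -> `|P.[x i]| < `|e|) ->
  (forall i, (i <= n)%N -> `|P.[y i]| < `|f|) ->
  Q = P.
Proof.
move=> size_QP QP0 x0_gt0 xn_le_y0 x_alt y_alt Px Py.
have [rs [size_rs uniq_rs root_rs mem_rs]] := roots_of_alternation x_alt Px.
have [ss [size_ss uniq_ss root_ss mem_ss]] := roots_of_alternation y_alt Py.
have xn_gt0 : 0 < x n by have := le_first_last x_alt.1; lra.
apply/eqP; rewrite -subr_eq0; apply: contraTT size_QP => QP_neq0; rewrite -ltnNge.
have := max_poly_roots QP_neq0 (rs := 0 :: rs ++ ss).
rewrite /= size_cat size_rs size_ss all_cat root_rs root_ss andbT.
rewrite rootE !hornerD hornerN QP0 subrr eqxx cat_uniq uniq_rs uniq_ss andbT.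
rewrite mem_cat negb_or mul2n -addnn; apply=> //=; rewrite andbT -andbA.
apply/and3P; split.
- by apply/negP => /(allP mem_rs) /andP[]; lra.
- by apply/negP => /(allP mem_ss) /andP[]; lra.
- by apply/hasP => -[s /(allP mem_ss) /andP[y0s _] /(allP mem_rs) /andP[_ sxn]]; lra.
Qed.

End Alternation.

Section SupNorm.
Variable R : realType.
Implicit Types (A : set R) (P : {poly R}).

Lemma horner_bounded P (M : R) : exists B, forall x, `|x| <= M -> `|P.[x]| <= B.
Proof.
elim/poly_ind: P => [|P c [B PB]]; first by exists 0 => x _; rewrite horner0 normr0.
exists (`|B| * `|M| + `|c|) => x xM; rewrite hornerMXaddC.
rewrite (le_trans (ler_normD _ _)) // lerD2r normrM.
apply: ler_pM => //; first exact: le_trans (PB x xM) (ler_norm B).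
exact: le_trans xM (ler_norm M).
Qed.

Lemma supnorm_on_ge A P (M : R) x :
  (forall z, A z -> `|z| <= M) -> A x -> `|P.[x]| <= supnorm_on A P.
Proof.
move=> AM Ax; have [B PB] := horner_bounded P M.
apply: sup_upper_bound; last by exists x.
split; first by exists `|P.[x]|, x.
by exists B => _ [z Az <-]; apply/PB/AM.
Qed.

Lemma supnorm_on_le A P (E : R) :
  A !=set0 -> (forall x, A x -> `|P.[x]| <= E) -> supnorm_on A P <= E.
Proof.
move=> [x Ax] PE; apply: ge_sup; first by exists `|P.[x]|, x.
by move=> _ [z Az <-]; apply: PE.
Qed.

End SupNorm.

Section QuadraticBranches.
Variables (R : realType) (k c g d : R).
Hypotheses (k_gt0 : 0 < k) (g_ge0 : 0 <= g) (d_ge0 : 0 <= d).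
Hypothesis d_sqr : d ^+ 2 = 2 / k + g ^+ 2.

Definition quad (x : R) := k * ((x - c) ^+ 2 - g ^+ 2) - 1.

Lemma quad_bound x : g <= `|x - c| <= d -> -1 <= quad x <= 1.
Proof.
case/andP=> g_le d_ge; have sqr_norm := real_normK (num_real (x - c)).
have sq_lo : g ^+ 2 <= (x - c) ^+ 2 by rewrite -sqr_norm ler_sqr ?nnegrE.
have sq_hi : (x - c) ^+ 2 <= 2 / k + g ^+ 2 by rewrite -d_sqr -sqr_norm ler_sqr ?nnegrE.
have lo : 0 <= k * ((x - c) ^+ 2 - g ^+ 2) by rewrite mulr_ge0 ?subr_ge0 // ltW.
have hi : k * ((x - c) ^+ 2 - g ^+ 2) <= k * (2 / k) by rewrite ler_pM2l // lerBlDr sq_hi.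
have k2 : k * (2 / k) = 2 by field; rewrite gt_eqF.
rewrite /quad; apply/andP; split; lra.
Qed.

Definition quad_root (s : R) := Num.sqrt ((s + 1) / k + g ^+ 2).

Lemma quad_root_sqr s : -1 <= s -> quad_root s ^+ 2 = (s + 1) / k + g ^+ 2.
Proof.
move=> s_ge; have s1_ge0 : 0 <= s + 1 by lra.
by rewrite sqr_sqrtr // addr_ge0 ?sqr_ge0 // divr_ge0 // ltW.
Qed.

Lemma quad_root_bound s : -1 <= s <= 1 -> g <= quad_root s <= d.
Proof.
case/andP=> s_ge s_le.
have t_ge0 : 0 <= (s + 1) / k by apply: divr_ge0; [lra | exact: ltW].
have t_le : (s + 1) / k <= 2 / k by rewrite ler_pM2r ?invr_gt0 //; lra.
rewrite -{1}(ger0_norm g_ge0) -(ger0_norm d_ge0) -!sqrtr_sqr d_sqr.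
have w_ge0 : 0 <= (s + 1) / k + g ^+ 2 by rewrite addr_ge0 ?sqr_ge0.
have d2_ge0 : 0 <= 2 / k + g ^+ 2 by rewrite addr_ge0 ?sqr_ge0 ?(le_trans t_ge0 t_le).
by rewrite !ler_sqrt //; apply/andP; split; lra.
Qed.

Lemma quad_root_lt s s' : -1 <= s -> s < s' -> quad_root s < quad_root s'.
Proof.
move=> s_ge lt_ss'; have t_ge0 : 0 <= (s + 1) / k by apply: divr_ge0; [lra | exact: ltW].
have lt_t : (s + 1) / k < (s' + 1) / k by rewrite ltr_pM2r ?invr_gt0 // ltrD2r.
have g2_ge0 := sqr_ge0 g.
by rewrite ltr_sqrt ?ltrD2r //; lra.
Qed.

Lemma quad_root_inv s x : -1 <= s -> `|x - c| = quad_root s -> quad x = s.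
Proof.
move=> s_ge xc; rewrite /quad -(real_normK (num_real (x - c))) xc quad_root_sqr //.
by rewrite addrK mulrC mulfVK ?gt_eqF // addrK.
Qed.

Lemma quad_subr_root s : -1 <= s -> quad (c - quad_root s) = s.
Proof.
move=> s_ge; apply: quad_root_inv => //.
by rewrite addrAC subrr add0r normrN ger0_norm // sqrtr_ge0.
Qed.

Lemma quad_addr_root s : -1 <= s -> quad (c + quad_root s) = s.
Proof.
move=> s_ge; apply: quad_root_inv => //.
by rewrite addrAC subrr add0r ger0_norm // sqrtr_ge0.
Qed.

End QuadraticBranches.

Lemma sqrt_ratio_identity (R : rcfType) (a b : R) : 0 < b < a ->
  let m := ((Num.sqrt a - Num.sqrt b) / Num.sqrt (a - b)) ^+ 2 in
  0 < m /\ (1 + m) ^+ 2 * (a - b) = 4 * m * a.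
Proof.
case/andP=> b_gt0 lt_ba m; have ab_gt0 : 0 < a - b by rewrite subr_gt0.
rewrite {}/m; set u := Num.sqrt a; set v := Num.sqrt b; set w := Num.sqrt (a - b).
have u2 : u ^+ 2 = a by rewrite sqr_sqrtr // ltW // (lt_trans b_gt0).
have v2 : v ^+ 2 = b by rewrite sqr_sqrtr // ltW.
have w2 : w ^+ 2 = a - b by rewrite sqr_sqrtr // ltW.
have lt_vu : v < u by rewrite ltr_sqrt // (lt_trans b_gt0).
have w2_neq0 : w ^+ 2 != 0 by rewrite w2 gt_eqF.
have w_neq0 : w != 0 by apply: contraNneq w2_neq0 => ->; rewrite expr0n.
split; first by rewrite exprn_even_gt0 // mulf_neq0 ?invr_eq0 // subr_eq0 gt_eqF.
have one_m : 1 + ((u - v) / w) ^+ 2 = 2 * u * (u - v) / w ^+ 2.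
  rewrite expr_div_n -{1}(divff w2_neq0) -mulrDl {1}w2 -u2 -v2; congr (_ / _); ring.
by rewrite one_m -w2 -u2; field.
Qed.

Section TwoIntervals.
Variables (R : realType) (mu1 L1 mu2 L2 : R).
Hypotheses (mu1_gt0 : 0 < mu1) (lt_mu1L1 : mu1 < L1) (le_L1mu2 : L1 <= mu2)
  (lt_mu2L2 : mu2 < L2) (eq_widths : L1 - mu1 = L2 - mu2).

Local Notation m := (m_ mu1 L1 mu2 L2).

Lemma m_spec : 0 < m /\ (1 + m) ^+ 2 * ((L1 - mu1) * (mu2 - mu1)) = 4 * m * (L1 * mu2).
Proof.
move: (eq_widths) (lt_mu1L1) (le_L1mu2) (lt_mu2L2) (mu1_gt0) => ? ? ? ? ?.
have L2E : L2 = mu2 + L1 - mu1 by lra.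
have D_neq0 : mu2 + L1 - mu1 - mu1 != 0 by apply/eqP; lra.
have D2_gt0 : 0 < (L2 - mu1) ^+ 2 by rewrite exprn_gt0 // subr_gt0; lra.
set rho := rho_ mu1 L2; set r := Rr_ mu1 L1 mu2 L2.
have rho_r : rho ^+ 2 - r ^+ 2 = 4 * (L1 * mu2) / (L2 - mu1) ^+ 2.
  by rewrite /rho /r /rho_ /Rr_ L2E; field.
have one_r : 1 - r ^+ 2 = 4 * ((L1 - mu1) * (mu2 - mu1)) / (L2 - mu1) ^+ 2.
  by rewrite /r /Rr_ L2E; field.
have rho_1 : rho ^+ 2 - 1 = 4 * (L2 * mu1) / (L2 - mu1) ^+ 2.
  by rewrite /rho /rho_; field; apply/eqP; lra.
have r_diff : 1 - r ^+ 2 = (rho ^+ 2 - r ^+ 2) - (rho ^+ 2 - 1) by ring.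
have pos X : 0 < X -> 0 < 4 * X / (L2 - mu1) ^+ 2.
  by move=> X_gt0; rewrite divr_gt0 // mulr_gt0 //; lra.
have [|m_gt0 m_eq] := @sqrt_ratio_identity R (rho ^+ 2 - r ^+ 2) (rho ^+ 2 - 1).
  apply/andP; split; first by rewrite rho_1 pos //; apply: mulr_gt0; lra.
  by rewrite -subr_gt0 -r_diff one_r pos //; apply: mulr_gt0; lra.
rewrite /m_ -/rho -/r r_diff; split=> //.
have scale X : X = 4 * X / (L2 - mu1) ^+ 2 * ((L2 - mu1) ^+ 2 / 4).
  by field; apply/eqP; lra.
rewrite [(L1 - mu1) * _]scale [L1 * mu2]scale -one_r -rho_r r_diff.
by rewrite [LHS]mulrA m_eq [RHS]mulrA.
Qed.

Local Notation k := ((1 + m) ^+ 2 / (2 * m * (L1 * mu2))).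
Local Notation c := ((L1 + mu2) / 2).
Local Notation g := ((mu2 - L1) / 2).
Local Notation d := ((L1 + mu2) / 2 - mu1).

Lemma sigma2_scale_gt0 : 0 < k.
Proof.
have [m_gt0 _] := m_spec; move: (lt_mu1L1) (le_L1mu2) (mu1_gt0) => ? ? ?.
apply: divr_gt0; first by rewrite exprn_gt0 // addr_gt0.
by apply: mulr_gt0; [apply: mulr_gt0 | apply: mulr_gt0]; lra.
Qed.

Lemma horner_sigma2 x : (sigma2 mu1 L1 mu2 L2).[x] = quad k c g x.
Proof.
have [m_gt0 _] := m_spec; move: (lt_mu1L1) (le_L1mu2) (mu1_gt0) => ? ? ?.
rewrite /sigma2 /quad /=; move: m_gt0; move: (m_ mu1 L1 mu2 L2) => M M_gt0.
rewrite !(hornerD, hornerN, hornerM, hornerZ, hornerC, hornerX).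
by field; rewrite !gt_eqF //; lra.
Qed.

Lemma sigma2_0_ge1 : 1 <= (sigma2 mu1 L1 mu2 L2).[0].
Proof.
have [m_gt0 _] := m_spec; move: (lt_mu1L1) (le_L1mu2) (mu1_gt0) => ? ? ?.
have -> : (sigma2 mu1 L1 mu2 L2).[0] = 1 + (1 - m) ^+ 2 / (2 * m).
  by rewrite horner_sigma2 /quad; field; rewrite !gt_eqF //; lra.
by rewrite lerDl divr_ge0 ?sqr_ge0 // mulr_ge0 // ltW.
Qed.

Lemma half_width_sqr : d ^+ 2 = 2 / k + g ^+ 2.
Proof.
have [m_gt0 m_eq] := m_spec; move: (lt_mu1L1) (le_L1mu2) (mu1_gt0) => ? ? ?.
have k_widths : k * ((L1 - mu1) * (mu2 - mu1)) = 2.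
  by rewrite mulrAC m_eq; field; rewrite !gt_eqF //; lra.
have k_neq0 : k != 0 by rewrite gt_eqF ?sigma2_scale_gt0.
have -> : 2 / k = (L1 - mu1) * (mu2 - mu1).
  by apply: (mulfI k_neq0); rewrite k_widths (mulrC k) divfK.
by field.
Qed.

Lemma Lam_iff x : Lam mu1 L1 mu2 L2 x <-> g <= `|x - c| <= d.
Proof.
move: (eq_widths) (lt_mu1L1) (le_L1mu2) (lt_mu2L2) => ? ? ? ?.
rewrite /Lam; split.
- case=> /andP[x_lo x_hi].
    by rewrite ler0_norm ?subr_le0; [apply/andP; split|]; lra.
  by rewrite ger0_norm ?subr_ge0; [apply/andP; split|]; lra.
- have [xc|xc] := leP ((L1 + mu2) / 2) x.
    by rewrite ger0_norm ?subr_ge0 // => /andP[? ?]; right; apply/andP; split; lra.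
  by rewrite ltr0_norm ?subr_lt0 // => /andP[? ?]; left; apply/andP; split; lra.
Qed.

End TwoIntervals.

Lemma size_sigma2 (R : realType) (mu1 L1 mu2 L2 : R) :
  (size (sigma2 mu1 L1 mu2 L2) <= 3)%N.
Proof.
have size_lin (a b : R) : (size (a%:P - b *: 'X)%R <= 2)%N.
  rewrite (leq_trans (size_polyD _ _)) // size_polyN geq_max.
  rewrite (leq_trans (size_polyC_leq1 _)) //.
  by rewrite (leq_trans (size_scale_leq _ _)) ?size_polyX.
rewrite /sigma2 (leq_trans (size_polyD _ _)) // size_polyN size_poly1 geq_max andbT.
rewrite (leq_trans (size_scale_leq _ _)) // (leq_trans (size_polyMleq _ _)) //.
by move: (size_lin (1 + m_ mu1 L1 mu2 L2) ((1 + m_ mu1 L1 mu2 L2) / L1))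
  (size_lin (1 + m_ mu1 L1 mu2 L2) ((1 + m_ mu1 L1 mu2 L2) / mu2)); lia.
Qed.

Section ExtremalPolynomial.
Variables (R : realType) (mu1 L1 mu2 L2 : R) (n : nat).
Hypotheses (mu1_gt0 : 0 < mu1) (lt_mu1L1 : mu1 < L1) (le_L1mu2 : L1 <= mu2)
  (lt_mu2L2 : mu2 < L2) (eq_widths : L1 - mu1 = L2 - mu2) (n_gt0 : (0 < n)%N).

Local Notation m := (m_ mu1 L1 mu2 L2).
Local Notation k := ((1 + m) ^+ 2 / (2 * m * (L1 * mu2))).
Local Notation c := ((L1 + mu2) / 2).
Local Notation g := ((mu2 - L1) / 2).
Local Notation d := ((L1 + mu2) / 2 - mu1).
Local Notation Q := (Qopt mu1 L1 mu2 L2 n).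
Local Notation E := ((cheb R n).[(sigma2 mu1 L1 mu2 L2).[0]])^-1.

Let k_gt0 := sigma2_scale_gt0 mu1_gt0 lt_mu1L1 le_L1mu2 lt_mu2L2 eq_widths.
Let g_ge0 : 0 <= g. Proof. by rewrite divr_ge0 // subr_ge0. Qed.
Let d_ge0 : 0 <= d. Proof. by move: (lt_mu1L1) (le_L1mu2) => ? ?; lra. Qed.
Let d_sqr := half_width_sqr mu1_gt0 lt_mu1L1 le_L1mu2 lt_mu2L2 eq_widths.

Lemma level_gt0 : 0 < E.
Proof.
by rewrite invr_gt0 (lt_le_trans ltr01) // cheb_ge1 // sigma2_0_ge1.
Qed.

Lemma horner_Qopt x : Q.[x] = E * (cheb R n).[quad k c g x].
Proof.
by rewrite /Qopt /= hornerZ horner_comp [(sigma2 _ _ _ _).[x]]horner_sigma2.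
Qed.

Lemma horner_Qopt0 : Q.[0] = 1.
Proof.
by rewrite /Qopt /= hornerZ horner_comp mulVf // gt_eqF // -invr_gt0 level_gt0.
Qed.

Lemma size_Qopt : (size Q <= (2 * n).+1)%N.
Proof.
rewrite (leq_trans (size_scale_leq _ _)) // (leq_trans (size_comp_poly_leq _ _)) //.
rewrite ltnS mulnC leq_mul //.
- by case: (size _) (size_sigma2 mu1 L1 mu2 L2).
- by case: (size _) (size_cheb R n).
Qed.

Lemma norm_Qopt_le x : Lam mu1 L1 mu2 L2 x -> `|Q.[x]| <= E.
Proof.
move=> /(Lam_iff lt_mu1L1 le_L1mu2 lt_mu2L2 eq_widths) x_mem.
rewrite horner_Qopt normrM gtr0_norm ?level_gt0 //.
apply: ler_piMr; first exact/ltW/level_gt0.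
exact/norm_cheb_le1/(quad_bound k_gt0 g_ge0 d_ge0 d_sqr).
Qed.

Lemma quad_root_mem s : -1 <= s <= 1 ->
  mu1 <= c - quad_root k g s <= L1 /\ mu2 <= c + quad_root k g s <= L2.
Proof.
move=> /(quad_root_bound k_gt0 g_ge0 d_ge0 d_sqr) /andP[q_ge q_le].
by move: (eq_widths); split; apply/andP; split; lra.
Qed.

Definition left_extremum i := c - quad_root k g (cheb_node R n i).
Definition right_extremum i := c + quad_root k g (- cheb_node R n i).

Lemma left_extremum_mem i : mu1 <= left_extremum i <= L1.
Proof. exact: (proj1 (quad_root_mem (cheb_node_bound R n i))). Qed.

Lemma right_extremum_mem i : mu2 <= right_extremum i <= L2.
Proof.
apply: (proj2 (quad_root_mem _)).
by case/andP: (cheb_node_bound R n i) => ? ?; apply/andP; split; lra.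
Qed.

Lemma Qopt_alternates_left : alternates Q left_extremum n E.
Proof.
split=> [i lt_in | i _].
- rewrite ltrD2l ltrN2 quad_root_lt ?cheb_node_decr //.
  by case/andP: (cheb_node_bound R n i.+1).
- rewrite horner_Qopt quad_subr_root //; last by case/andP: (cheb_node_bound R n i).
  by rewrite horner_cheb_node // mulrC.
Qed.

Lemma Qopt_alternates_right : alternates Q right_extremum n ((-1) ^+ n * E).
Proof.
have node_ge i : -1 <= - cheb_node R n i.
  by rewrite lerNr opprK; case/andP: (cheb_node_bound R n i).
split=> [i lt_in | i _].
- by rewrite ltrD2l quad_root_lt // ltrN2 cheb_node_decr.
- rewrite horner_Qopt quad_addr_root // horner_chebN horner_cheb_node //.
  by rewrite mulrCA mulrA mulrC.
Qed.

Lemma supnorm_Qopt_le : supnorm_on (Lam mu1 L1 mu2 L2) Q <= E.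
Proof.
apply: supnorm_on_le => [|x]; last exact: norm_Qopt_le.
by exists (left_extremum 0%N); left; apply: left_extremum_mem.
Qed.

Lemma Qopt_level_attained (P : {poly R}) :
  (size P <= (2 * n).+1)%N -> P.[0] = 1 ->
  exists2 z, Lam mu1 L1 mu2 L2 z & E <= `|P.[z]|.
Proof.
move=> size_P P0; apply: contrapT => no_z.
have P_lt z : Lam mu1 L1 mu2 L2 z -> `|P.[z]| < E.
  by move=> Lz; rewrite ltNge; apply/negP => ?; apply: no_z; exists z.
have x_mem := left_extremum_mem; have y_mem := right_extremum_mem.
have QP : Q = P.
  apply: (eq_poly_of_alternations _ _ _ _ Qopt_alternates_left Qopt_alternates_right).
  - rewrite (leq_trans (size_polyD _ _)) // size_polyN geq_max size_P andbT.
    exact: size_Qopt.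
  - by rewrite horner_Qopt0 P0.
  - by move: (mu1_gt0); case/andP: (x_mem 0%N); lra.
  - by move: (le_L1mu2); case/andP: (x_mem n); case/andP: (y_mem 0%N); lra.
  - by move=> i _; rewrite (gtr0_norm level_gt0); apply: P_lt; left; apply: x_mem.
  - move=> i _; rewrite normrM normrX normrN1 expr1n mul1r (gtr0_norm level_gt0).
    by apply: P_lt; right; apply: y_mem.
have := P_lt _ (or_introl (x_mem 0%N)).
by rewrite -QP Qopt_alternates_left.2 // mul1r gtr0_norm ?level_gt0 // ltxx.
Qed.

End ExtremalPolynomial.

Theorem proposition3 (R : realType) (mu1 L1 mu2 L2 : R) (n : nat) :
  0 < mu1 -> mu1 < L1 -> L1 <= mu2 -> mu2 < L2 -> L1 - mu1 = L2 - mu2 ->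
  (1 <= n)%N ->
  let t := (2 * n)%N in
  let Q := Qopt mu1 L1 mu2 L2 n in
  [/\ (size Q <= t.+1)%N, Q.[0] = 1 &
      forall P : {poly R}, (size P <= t.+1)%N -> P.[0] = 1 ->
        supnorm_on (Lam mu1 L1 mu2 L2) Q <= supnorm_on (Lam mu1 L1 mu2 L2) P].
Proof.
move=> mu1_gt0 lt_mu1L1 le_L1mu2 lt_mu2L2 eq_widths n_gt0 t Q.
split=> [||P size_P P0]; [exact: size_Qopt | exact: horner_Qopt0 |].
have [z Lz le_E_Pz] := Qopt_level_attained mu1_gt0 lt_mu1L1 le_L1mu2 lt_mu2L2
  eq_widths n_gt0 size_P P0.
have Lam_bounded x : Lam mu1 L1 mu2 L2 x -> `|x| <= L2.
  by case=> /andP[x_lo x_hi]; rewrite ler_norml; apply/andP; split; lra.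
apply: le_trans (supnorm_Qopt_le n mu1_gt0 lt_mu1L1 le_L1mu2 lt_mu2L2 eq_widths) _.
exact: le_trans le_E_Pz (supnorm_on_ge P Lam_bounded Lz).
Qed.
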